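(* Let $G$ be a 5-vertex-critical $(P_5,\text{chair})$-free graph and let $C=v_1v_2v_3v_4v_5v_1$ be an induced $C_5$ in $G$. Then $S_0=\varnothing$, i.e. every vertex of $V(G)\setminus V(C)$ has a neighbor in $V(C)$.
   Context: All graphs are finite and simple; $P_5$ is the path on 5 vertices; the chair is a $P_4$ plus a vertex adjacent to exactly one of the two middle vertices of the $P_4$; ''$H$-free'' means no induced subgraph isomorphic to $H$. A graph $G$ is $k$-vertex-critical if $\chi(G)=k$ and $\chi(G-v)<k$ for every $v\in V(G)$. $S_0=\{v\in V(G)\setminus V(C): N(v)\cap V(C)=\varnothing\}$. *)

From mathcomp Require Import all_boot.
Set Implicit Arguments. Unset Strict Implicit. Unset Printing Implicit Defensive.

Definition simple_graph (T : finType) (e : rel T) : Prop :=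
  symmetric e /\ irreflexive e.

Definition induced_sub (U : finType) (eH : rel U) (T : finType) (e : rel T) : Prop :=
  exists f : U -> T, injective f /\ forall x y, e (f x) (f y) = eH x y.

Definition H_free (U : finType) (eH : rel U) (T : finType) (e : rel T) : Prop :=
  ~ induced_sub eH e.

Definition P5_rel : rel 'I_5 := fun i j => (i.+1 == j :> nat) || (j.+1 == i :> nat).

Definition chair_edge (i j : nat) : bool :=
  [|| (i == 0) && (j == 1), (i == 1) && (j == 2), (i == 2) && (j == 3)
    | (i == 1) && (j == 4)].
Definition chair_rel : rel 'I_5 := fun i j => chair_edge i j || chair_edge j i.

Definition C5_rel : rel 'I_5 :=
  fun i j => (i.+1 %% 5 == j :> nat) || (j.+1 %% 5 == i :> nat).

Definition colorable_on (T : finType) (e : rel T) (S : {set T}) (k : nat) : Prop :=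
  exists c : T -> 'I_k, forall x y, x \in S -> y \in S -> e x y -> c x != c y.

Definition chromatic_number_eq (T : finType) (e : rel T) (k : nat) : Prop :=
  colorable_on e setT k /\ forall j, j < k -> ~ colorable_on e setT j.

Definition chi_lt (T : finType) (e : rel T) (S : {set T}) (k : nat) : Prop :=
  exists j, j < k /\ colorable_on e S j.

Definition vertex_critical (T : finType) (e : rel T) (k : nat) : Prop :=
  chromatic_number_eq e k /\ forall v : T, chi_lt e (setT :\ v) k.

From mathcomp Require Import all_boot ssralg zmodp perm.
Set Implicit Arguments. Unset Strict Implicit. Unset Printing Implicit Defensive.
Import GRing.Theory.

(* Let v be a vertex with no neighbour on the induced 5-cycle C = c 0 ... c 4
   (indices in Z/5Z, so that the rotations and reflections of C act on the
   indices).  We derive a 4-colouring of G, contradicting chi(G) = 5.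
   1. Induced P5s and chairs are built from five explicit vertices.
   2. Attachments: since G has no induced P5 or chair, a neighbour of a vertex
      anticomplete to C that sees C is complete to C (checked on the
      neighbourhood of c 0 and transported by the symmetries of C), and a
      vertex complete to C that sees one end of an edge anticomplete to C
      sees the other end.
   3. Hence, for the component K of v in G[S0] (S0 = vertices anticomplete to
      C), every vertex of the boundary of K is complete to C and to K.
   4. Colour G - v and G - c 0 with 4 colours.  In the first colouring the
      boundary of K is monochromatic, as two colours on vertices complete to
      C would leave two colours for the odd cycle C.  Keeping the first
      colouring outside K and a permutation of the second one on K, chosen so
      that K avoids the boundary colour, colours G with 4 colours. *)

Definition cycle5 (T : finType) (e : rel T) (c : 'I_5 -> T) : Prop :=
  forall i j, e (c i) (c j) = C5_rel i j.

Definition anticomplete (T : finType) (e : rel T) (c : 'I_5 -> T) (x : T) : Prop :=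
  forall i, ~~ e x (c i).

Definition far_set (T : finType) (e : rel T) (c : 'I_5 -> T) : {set T} :=
  [set x | [forall i, ~~ e x (c i)]].

Definition proper_on (T : finType) (e : rel T) (S : {set T}) (k : nat)
    (f : T -> 'I_k) : Prop :=
  forall x y, x \in S -> y \in S -> e x y -> f x != f y.

Definition boundary (T : finType) (e : rel T) (K : {set T}) : {set T} :=
  [set y | (y \notin K) && [exists x in K, e x y]].

Definition within (T : finType) (e : rel T) (S : {set T}) : rel T :=
  [rel x y | [&& x \in S, y \in S & e x y]].

Definition component (T : finType) (e : rel T) (S : {set T}) (v : T) : {set T} :=
  [set x | connect (within e S) v x].

Lemma C5_relE (i j : 'I_5) : C5_rel i j = (j == i + 1)%R || (i == j + 1)%R.
Proof. by case: i => [[|[|[|[|[|i]]]]] ?]; case: j => [[|[|[|[|[|j]]]]] ?]. Qed.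

Lemma C5_rel_rot (i j k : 'I_5) : C5_rel (i + k)%R (j + k)%R = C5_rel i j.
Proof. by rewrite !C5_relE !(addrAC _ k) !(inj_eq (addIr k)). Qed.

Lemma C5_rel_opp (i j : 'I_5) : C5_rel (- i)%R (- j)%R = C5_rel i j.
Proof. by case: i => [[|[|[|[|[|i]]]]] ?]; case: j => [[|[|[|[|[|j]]]]] ?]. Qed.

Lemma C5_twin_free (i j : 'I_5) : (forall k, C5_rel i k = C5_rel j k) -> i = j.
Proof.
case: i j => [[|[|[|[|[|i]]]]] ?] [[|[|[|[|[|j]]]]] ?] // tw; try exact: val_inj;
  by move: (tw 0%R) (tw 1%R) (tw 2%R) (tw 3%R) (tw 4%R); rewrite /C5_rel /=.
Qed.

Lemma forall_I5 (P : 'I_5 -> Prop) :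
  P 0%R -> P 1%R -> P 2%R -> P 3%R -> P 4%R -> forall i, P i.
Proof.
move=> P0 P1 P2 P3 P4 [[|[|[|[|[|i]]]]] lt_i5] //.
- by have -> : Ordinal lt_i5 = 0%R by apply: val_inj.
- by have -> : Ordinal lt_i5 = 1%R by apply: val_inj.
- by have -> : Ordinal lt_i5 = 2%R by apply: val_inj.
- by have -> : Ordinal lt_i5 = 3%R by apply: val_inj.
- by have -> : Ordinal lt_i5 = 4%R by apply: val_inj.
Qed.

Section InducedPatterns.
Variables (T : finType) (e : rel T).
Hypotheses (e_sym : symmetric e) (e_irr : irreflexive e).

(* A map reproducing the adjacency of R is an induced embedding as soon as it
   separates the pairs of twins of R (other pairs are separated for free). *)
Lemma induced_of_map (U : finType) (R : rel U) (f : U -> T) :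
  (forall i j, e (f i) (f j) = R i j) ->
  (forall i j, i != j -> (forall k, R i k = R j k) -> f i != f j) ->
  induced_sub R e.
Proof.
move=> adj sep; exists f; split=> // i j fij; apply/eqP; apply: contraT => nij.
have twins k : R i k = R j k by rewrite -!adj fij.
by have := sep i j nij twins; rewrite fij eqxx.
Qed.

Lemma adj_from_upper n (R : rel 'I_n) (f : 'I_n -> T) :
  symmetric R -> irreflexive R ->
  (forall i j : 'I_n, i < j -> e (f i) (f j) = R i j) ->
  forall i j, e (f i) (f j) = R i j.
Proof.
move=> R_sym R_irr up i j; case: (ltngtP i j) => [ij | ji | /val_inj ->].
- exact: up.
- by rewrite e_sym R_sym up.
- by rewrite e_irr R_irr.
Qed.

Lemma P5_sym : symmetric P5_rel. Proof. by move=> i j; apply: orbC. Qed.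
Lemma P5_irr : irreflexive P5_rel. Proof. by case=> [[|[|[|[|[|?]]]]] ?]. Qed.

Lemma induced_P5 (t0 t1 t2 t3 t4 : T) :
  e t0 t1 -> e t1 t2 -> e t2 t3 -> e t3 t4 ->
  ~~ e t0 t2 -> ~~ e t0 t3 -> ~~ e t0 t4 -> ~~ e t1 t3 -> ~~ e t1 t4 -> ~~ e t2 t4 ->
  induced_sub P5_rel e.
Proof.
move=> h01 h12 h23 h34 n02 n03 n04 n13 n14 n24.
pose t (k : 'I_5) := nth t0 [:: t0; t1; t2; t3; t4] k.
apply: (@induced_of_map _ _ t).
  apply: adj_from_upper P5_sym P5_irr _.
  move=> [[|[|[|[|[|i]]]]] ?] [[|[|[|[|[|j]]]]] ?] //= _;
  by rewrite ?h01 ?h12 ?h23 ?h34 ?(negbTE n02) ?(negbTE n03) ?(negbTE n04)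
             ?(negbTE n13) ?(negbTE n14) ?(negbTE n24).
move=> [[|[|[|[|[|i]]]]] ?] [[|[|[|[|[|j]]]]] ?] //= _ tw;
  (* One of the five vertices tells apart any two distinct vertices of P5. *)
  by move: (tw 0%R) (tw 1%R) (tw 2%R) (tw 3%R) (tw 4%R); rewrite /P5_rel /=.
Qed.

Lemma chair_sym : symmetric chair_rel. Proof. by move=> i j; apply: orbC. Qed.
Lemma chair_irr : irreflexive chair_rel. Proof. by case=> [[|[|[|[|[|?]]]]] ?]. Qed.

(* t0 - t1 - t2 - t3 with the pendant t4 at t1 is an induced chair; t0 and t4
   are twins of the chair, so their distinctness is assumed. *)
Lemma induced_chair (t0 t1 t2 t3 t4 : T) : t0 != t4 ->
  e t0 t1 -> e t1 t2 -> e t2 t3 -> e t1 t4 ->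
  ~~ e t0 t2 -> ~~ e t0 t3 -> ~~ e t0 t4 -> ~~ e t1 t3 -> ~~ e t2 t4 -> ~~ e t3 t4 ->
  induced_sub chair_rel e.
Proof.
move=> d04 h01 h12 h23 h14 n02 n03 n04 n13 n24 n34.
pose t (k : 'I_5) := nth t0 [:: t0; t1; t2; t3; t4] k.
apply: (@induced_of_map _ _ t).
  apply: adj_from_upper chair_sym chair_irr _.
  move=> [[|[|[|[|[|i]]]]] ?] [[|[|[|[|[|j]]]]] ?] //= _;
  by rewrite ?h01 ?h12 ?h23 ?h14 ?(negbTE n02) ?(negbTE n03) ?(negbTE n04)
             ?(negbTE n13) ?(negbTE n24) ?(negbTE n34).
move=> [[|[|[|[|[|i]]]]] ?] [[|[|[|[|[|j]]]]] ?] //= _ tw; rewrite ?(eq_sym t4) //;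
  by move: (tw 0%R) (tw 1%R) (tw 2%R) (tw 3%R) (tw 4%R); rewrite /chair_rel /chair_edge /=.
Qed.

End InducedPatterns.

Section Cycle.
Variables (T : finType) (e : rel T) (c : 'I_5 -> T).
Hypothesis c_cycle : cycle5 e c.

Lemma cycle5_inj : injective c.
Proof. by move=> i j cij; apply: C5_twin_free => k; rewrite -!c_cycle cij. Qed.

Lemma cycle5_rot k : cycle5 e (fun i => c (i + k)%R).
Proof. by move=> i j; rewrite c_cycle C5_rel_rot. Qed.

Lemma cycle5_opp : cycle5 e (fun i => c (- i)%R).
Proof. by move=> i j; rewrite c_cycle C5_rel_opp. Qed.

(* A vertex anticomplete to C is not on C, since every c i has a neighbour. *)
Lemma anticomplete_off_cycle x : anticomplete e c x -> forall i, x != c i.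
Proof.
move=> x_far i; apply/eqP => x_ci.
by move: (x_far (i + 1)%R); rewrite x_ci c_cycle C5_relE eqxx.
Qed.

End Cycle.

Section Attachments.
Variables (T : finType) (e : rel T).
Hypotheses (e_sym : symmetric e) (e_irr : irreflexive e).
Hypotheses (P5_free : H_free P5_rel e) (chair_free : H_free chair_rel e).

(* A vertex complete to C spreads along edges anticomplete to C: otherwise
   c 0 - y - x - z with the pendant c 2 at y is an induced chair. *)
Lemma complete_spreads c x y z :
  cycle5 e c -> (forall i, e y (c i)) -> anticomplete e c x -> anticomplete e c z ->
  e y x -> e x z -> e y z.
Proof.
move=> c_cycle y_full x_far z_far yx xz; apply: contraT => n_yz; exfalso.
apply: chair_free; apply: (@induced_chair _ _ e_sym e_irr (c 0%R) y x z (c 2%R));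
  by rewrite ?c_cycle ?(inj_eq (cycle5_inj c_cycle)) // e_sym.
Qed.

Variables (x y : T).
Hypothesis xy : e x y.

(* If y sees c i, it sees c j or c k for an induced path i - j - k of C:
   otherwise x - y - c i - c j - c k is an induced P5. *)
Lemma P5_step c i j k : cycle5 e c -> anticomplete e c x ->
  C5_rel i j -> C5_rel j k -> ~~ C5_rel i k ->
  e y (c i) -> e y (c j) || e y (c k).
Proof.
move=> c_cycle x_far ij jk n_ik yi; apply: contraT; rewrite negb_or => /andP [n_yj n_yk].
exfalso; apply: P5_free.
by apply: (@induced_P5 _ _ e_sym e_irr x y (c i) (c j) (c k)); rewrite ?c_cycle.
Qed.

(* If y sees c i, it sees one of its neighbours c j, c k on C: otherwise
   c j - c i - y - x with the pendant c k at c i is an induced chair. *)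
Lemma chair_step c j i k : cycle5 e c -> anticomplete e c x ->
  C5_rel j i -> C5_rel i k -> ~~ C5_rel j k -> j != k ->
  e y (c i) -> e y (c j) || e y (c k).
Proof.
move=> c_cycle x_far ji ik n_jk jk yi; apply: contraT; rewrite negb_or => /andP [n_yj n_yk].
exfalso; apply: chair_free.
apply: (@induced_chair _ _ e_sym e_irr (c j) (c i) y x (c k));
  by rewrite ?c_cycle ?(inj_eq (cycle5_inj c_cycle)) // e_sym.
Qed.

(* If y sees two non-adjacent c p, c q, it sees the neighbour c a of c q
   that is not adjacent to c p: otherwise c p - y - c q - c a with the pendant
   x at y is an induced chair. *)
Lemma chair_two_step c p q a : cycle5 e c -> anticomplete e c x ->
  C5_rel q a -> ~~ C5_rel p a -> ~~ C5_rel p q ->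
  e y (c p) -> e y (c q) -> e y (c a).
Proof.
move=> c_cycle x_far qa n_pa n_pq yp yq; apply: contraT => n_ya; exfalso.
apply: chair_free; apply: (@induced_chair _ _ e_sym e_irr (c p) y (c q) (c a) x);
  rewrite ?c_cycle //; try by rewrite e_sym.
by rewrite eq_sym; apply: anticomplete_off_cycle.
Qed.

(* Seeing the edge c 0 c 1, y sees c 4 or c 3 by the P5 step, and the
   distance-two steps then give all of C. *)
Lemma complete_from_01 c : cycle5 e c -> anticomplete e c x ->
  e y (c 0%R) -> e y (c 1%R) -> forall j, e y (c j).
Proof.
move=> c_cycle x_far y0 y1.
have step := chair_two_step c_cycle x_far.
have [y4 | y3] :=
  orP (P5_step (i := 0%R) (j := 4%R) (k := 3%R) c_cycle x_far isT isT isT y0).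
- have y2 := step 4%R 1%R 2%R isT isT isT y4 y1.
  have y3 := step 0%R 2%R 3%R isT isT isT y0 y2.
  exact: forall_I5.
- have y2 := step 0%R 3%R 2%R isT isT isT y0 y3.
  have y4 := step 1%R 3%R 4%R isT isT isT y1 y3.
  exact: forall_I5.
Qed.

(* Seeing c 0, y sees c 1 or c 4 by the chair step; the second case is the
   first one for the reflected cycle i |-> c (- i). *)
Lemma complete_from_0 c : cycle5 e c -> anticomplete e c x ->
  e y (c 0%R) -> forall j, e y (c j).
Proof.
move=> c_cycle x_far y0.
have [y4 | y1] :=
  orP (chair_step (j := 4%R) (i := 0%R) (k := 1%R) c_cycle x_far isT isT isT isT y0).
- have x_far' : anticomplete e (fun i => c (- i)%R) x by move=> i; apply: x_far.
  have opp1 : (- 1 = 4 :> 'I_5)%R by apply: val_inj.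
  have y_full := complete_from_01 (cycle5_opp c_cycle) x_far'.
  by move=> j; rewrite -(opprK j); apply: y_full; rewrite ?oppr0 ?opp1.
- exact: complete_from_01.
Qed.

(* A neighbour y of a vertex x anticomplete to C that sees C is complete to C
   (rotate C so that the seen vertex becomes c 0). *)
Lemma complete_to_cycle c i : cycle5 e c -> anticomplete e c x ->
  e y (c i) -> forall j, e y (c j).
Proof.
move=> c_cycle x_far yi j; rewrite -(subrK i j).
have x_far' : anticomplete e (fun j => c (j + i)%R) x by move=> l; apply: x_far.
by apply: (complete_from_0 (cycle5_rot c_cycle i) x_far'); rewrite add0r.
Qed.

End Attachments.

Section Component.
Variables (T : finType) (e : rel T) (S : {set T}) (v : T).
Hypothesis v_in_S : v \in S.

Lemma component_root : v \in component e S v.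
Proof. by rewrite inE connect0. Qed.

Lemma component_sub : {subset component e S v <= S}.
Proof.
move=> x; rewrite inE => vx.
have S_closed : closed (within e S) S by move=> x' z' /and3P [-> ->].
by rewrite -(closed_connect S_closed vx).
Qed.

Lemma component_exit x y : x \in component e S v -> y \in S -> e x y ->
  y \in component e S v.
Proof.
move=> xK yS xy; have xS := component_sub xK.
move: xK; rewrite !inE => vx; apply: (connect_trans vx); apply: connect1.
by rewrite /within /= xS yS xy.
Qed.

Lemma component_const (a : pred T) :
  (forall x z, x \in S -> z \in S -> e x z -> a x = a z) ->
  {in component e S v &, forall x z, a x = a z}.
Proof.
move=> a_inv x z; rewrite !inE => vx vz.
have a_closed : closed (within e S) a by move=> x' z' /and3P [x'S z'S /a_inv]; apply.
move: (closed_connect a_closed vx) (closed_connect a_closed vz).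
by rewrite !unfold_in => <-.
Qed.

End Component.

Section Colourings.
Variables (T : finType) (e : rel T).

Lemma proper_onS k (S S' : {set T}) (f : T -> 'I_k) :
  S' \subset S -> proper_on e S f -> proper_on e S' f.
Proof. by move=> /subsetP sub fP x y /sub xS /sub yS; apply: fP. Qed.

Lemma four_colouring (S : {set T}) :
  chi_lt e S 5 -> exists f : T -> 'I_4, proper_on e S f.
Proof.
case=> j [lt_j5 [f fP]]; exists (fun x => widen_ord (lt_j5 : j <= 4) (f x)).
by move=> x y xS yS xy; have := fP x y xS yS xy; apply: contra => /eqP [/val_inj ->].
Qed.

Lemma two_colours (a b u w z : 'I_4) : a != b ->
  u \notin [set a; b] -> w \notin [set a; b] -> z \notin [set a; b] ->
  u != w -> w != z -> u = z.
Proof.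
move=> ab; rewrite !inE !negb_or => /andP[ua ub] /andP[wa wb] /andP[za zb] uw wz.
have full : a |: (b |: (u |: [set w])) = setT.
  apply/eqP; rewrite eqEcard subsetT cardsT card_ord !cardsU1 cards1 !inE.
  by rewrite (negbTE ab) !(eq_sym a) !(eq_sym b) (negbTE ua) (negbTE wa)
             (negbTE ub) (negbTE wb) uw.
have := in_setT z; rewrite -full !inE (negbTE za) (negbTE zb) (eq_sym z w) (negbTE wz).
by rewrite orbF => /eqP.
Qed.

(* Two vertices complete to C get the same colour in any proper 4-colouring:
   otherwise the odd cycle C would be coloured with the two remaining
   colours. *)
Lemma complete_same_colour c (S : {set T}) (f : T -> 'I_4) y z :
  cycle5 e c -> proper_on e S f -> (forall i, c i \in S) -> y \in S -> z \in S ->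
  (forall i, e y (c i)) -> (forall i, e z (c i)) -> f y = f z.
Proof.
move=> c_cycle fP cS yS zS y_full z_full; apply/eqP; apply: contraT => n_yz.
have avoid i : f (c i) \notin [set f y; f z].
  by rewrite !inE negb_or !(eq_sym (f (c i))) fP ?fP.
have adj i j : C5_rel i j -> f (c i) != f (c j).
  by move=> ij; apply: fP; rewrite ?c_cycle.
have f02 := two_colours n_yz (avoid 0%R) (avoid 1%R) (avoid 2%R)
  (adj 0%R 1%R isT) (adj 1%R 2%R isT).
have f24 := two_colours n_yz (avoid 2%R) (avoid 3%R) (avoid 4%R)
  (adj 2%R 3%R isT) (adj 3%R 4%R isT).
by have := adj 4%R 0%R isT; rewrite -f24 -f02 eqxx.
Qed.

Lemma boundary_notin (K : {set T}) y : y \in boundary e K -> y \notin K.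
Proof. by rewrite inE => /andP []. Qed.

Hypothesis e_sym : symmetric e.

(* Gluing: colour K by a permutation of psi and the rest of G by phi.  This
   works when the boundary of K is complete to K and monochromatic under phi,
   since then the permuted colours of K can be made to avoid that colour. *)
Lemma glue_colourings k (K : {set T}) (phi psi : T -> 'I_k) :
  proper_on e (~: K) phi -> proper_on e (K :|: boundary e K) psi ->
  {in boundary e K, forall y, {in K, forall x, e y x}} ->
  {in boundary e K &, forall y z, phi y = phi z} ->
  colorable_on e setT k.
Proof.
move=> phiP psiP bd_full bd_mono.
have [s s_avoid] : exists s : {perm 'I_k},
    forall x y, x \in K -> y \in boundary e K -> s (psi x) != phi y.
  case: (set_0Vmem (boundary e K)) => [-> | [y0 y0B]].
    by exists 1%g => x y _; rewrite inE.
  exists (tperm (psi y0) (phi y0)) => x y xK yB.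
  rewrite (bd_mono y y0) // -{2}(tpermL (psi y0) (phi y0)) (inj_eq perm_inj).
  by apply: psiP; rewrite ?in_setU ?xK ?y0B ?orbT // e_sym bd_full.
have to_boundary x y : x \in K -> y \notin K -> e x y -> y \in boundary e K.
  by move=> xK yK xy; rewrite inE yK; apply/existsP; exists x; rewrite xK.
exists (fun x => if x \in K then s (psi x) else phi x) => x y _ _ xy.
case: ifPn => xK; case: ifPn => yK.
- by rewrite (inj_eq perm_inj); apply: psiP; rewrite ?in_setU ?xK ?yK.
- exact: s_avoid xK (to_boundary _ _ xK yK xy).
- by rewrite eq_sym s_avoid // (to_boundary y) // e_sym.
- by apply: phiP; rewrite ?in_setC.
Qed.

End Colourings.

Section FarComponent.
Variables (T : finType) (e : rel T) (c : 'I_5 -> T) (v : T).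
Hypotheses (e_sym : symmetric e) (e_irr : irreflexive e).
Hypotheses (P5_free : H_free P5_rel e) (chair_free : H_free chair_rel e).
Hypotheses (c_cycle : cycle5 e c) (v_far : anticomplete e c v).

Local Notation S0 := (far_set e c).
Local Notation K := (component e S0 v).

Lemma far_setP x : reflect (anticomplete e c x) (x \in S0).
Proof. by rewrite inE; apply: forallP. Qed.

Lemma v_in_S0 : v \in S0.
Proof. exact/far_setP. Qed.

Lemma component_far x : x \in K -> anticomplete e c x.
Proof. by move=> /(component_sub v_in_S0) /far_setP. Qed.

(* A boundary vertex y of K lies outside S0, so it sees C; as it is adjacent
   to a vertex of K, it is complete to C. *)
Lemma boundary_complete_to_cycle y : y \in boundary e K -> forall i, e y (c i).
Proof.
rewrite inE => /andP [yK /existsP [x /andP [xK xy]]].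
have : y \notin S0.
  by apply: contra yK => yS; apply: (component_exit v_in_S0 xK yS xy).
rewrite /far_set inE negb_forall => /existsP [i]; rewrite negbK => yi.
exact: (complete_to_cycle e_sym e_irr P5_free chair_free xy c_cycle (component_far xK) yi).
Qed.

(* A boundary vertex of K is complete to K: adjacency to y is invariant along
   the edges of G[S0], by the spreading property of vertices complete to C. *)
Lemma boundary_complete_to_component :
  {in boundary e K, forall y, {in K, forall x, e y x}}.
Proof.
move=> y yB; have y_full := boundary_complete_to_cycle yB.
move: (yB); rewrite inE => /andP [_ /existsP [x0 /andP [x0K x0y]]].
have spread x z : x \in S0 -> z \in S0 -> e x z -> e y x = e y z.
  move=> /far_setP x_far /far_setP z_far xz; apply/idP/idP => [yx | yz].
    exact: (complete_spreads e_sym e_irr chair_free c_cycle y_full x_far z_far yx xz).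
  by apply: (complete_spreads e_sym e_irr chair_free c_cycle y_full z_far x_far yz);
    rewrite e_sym.
move=> x xK; rewrite -(component_const spread x0K xK) e_sym //.
Qed.

End FarComponent.

Theorem mainTheorem4 (T : finType) (e : rel T) (c : 'I_5 -> T) :
  simple_graph e ->
  vertex_critical e 5 ->
  H_free P5_rel e ->
  H_free chair_rel e ->
  injective c ->
  (forall i j, e (c i) (c j) = C5_rel i j) ->
  forall v : T, (forall i, v != c i) -> exists i, e v (c i).
Proof.
move=> [e_sym e_irr] [[_ not_4colourable] critical] P5_free chair_free _ c_cycle v _.
case: (boolP [exists i, e v (c i)]) => [/existsP // | /existsPn v_far].
exfalso; apply: (not_4colourable 4 isT).
pose K := component e (far_set e c) v.
have bd_C := boundary_complete_to_cycle e_sym e_irr P5_free chair_free c_cycle v_far.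
have K_far x : x \in K -> anticomplete e c x by apply: component_far.
have C_off_K i : c i \notin K.
  by apply/negP => /K_far /(anticomplete_off_cycle c_cycle) /(_ i); rewrite eqxx.
have [phi phiP] := four_colouring (critical v).
have [psi psiP] := four_colouring (critical (c 0%R)).
have phiK : proper_on e (~: K) phi.
  apply: proper_onS phiP; apply/subsetP => x; rewrite in_setC in_setD1 in_setT andbT.
  by apply: contra => /eqP ->; apply: component_root.
apply: (glue_colourings e_sym phiK (psi := psi)).
- apply: proper_onS psiP; apply/subsetP => x; rewrite in_setU in_setD1 in_setT andbT.
  case/orP => [/K_far x_far | /bd_C x_full].
    exact: (anticomplete_off_cycle c_cycle x_far).
  by apply/eqP => x_c0; move: (x_full 0%R); rewrite x_c0 e_irr.
- exact: (boundary_complete_to_component e_sym e_irr P5_free chair_free c_cycle v_far).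
- move=> y z yB zB; apply: (complete_same_colour c_cycle phiK); try exact: bd_C.
  + by move=> i; rewrite in_setC C_off_K.
  + by rewrite in_setC (boundary_notin yB).
  + by rewrite in_setC (boundary_notin zB).
Qed.
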